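(* Let $f:\mathbb{R}^M\times\Theta\to\mathbb{R}^N$ be a network whose first layer is linear, $f(\mathbf{x};\boldsymbol{\theta})=g(\mathbf{W}\mathbf{x};\bar{\boldsymbol{\theta}})$ with $\boldsymbol{\theta}=(\mathbf{W},\bar{\boldsymbol{\theta}})$, $\mathbf{W}\in\mathbb{R}^{d\times M}$, $g$ differentiable in its first argument and twice differentiable in the parameters. Let $(\mathbf{x}_i,\mathbf{y}_i)_{i=1}^n$ be training data with all $\mathbf{x}_i\ne0$ and let $\boldsymbol{\theta}^*$ be an exact interpolation solution ($f(\mathbf{x}_i;\boldsymbol{\theta}^* )=\mathbf{y}_i$ for all $i$) with first-layer weight $\mathbf{W}$. Then $$\mathrm{MLS}_f=\frac1n\sum_{i=1}^n\|J_f(\mathbf{x}_i)\|_2\le \|\mathbf{W}\|_2\sqrt{\frac1n\sum_{i=1}^n\frac{1}{\|\mathbf{x}_i\|_2^2}}\;S(\boldsymbol{\theta}^* )^{1/2}.$$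
   Context: The loss is $L(\boldsymbol{\theta})=\frac1n\sum_{i=1}^n\frac12\|f(\mathbf{x}_i;\boldsymbol{\theta})-\mathbf{y}_i\|_2^2$ and the sharpness is $S(\boldsymbol{\theta})=\operatorname{Tr}(\nabla^2_{\boldsymbol{\theta}}L(\boldsymbol{\theta}))$. $J_f(\mathbf{x})\in\mathbb{R}^{N\times M}$ is the Jacobian of $\mathbf{x}\mapsto f(\mathbf{x};\boldsymbol{\theta}^* )$; the Maximum Local Sensitivity $\mathrm{MLS}_f$ is the sample mean of its largest singular value over the training inputs. $\|\cdot\|_2$ is the Euclidean norm for vectors and spectral norm for matrices. *)

From mathcomp Require Import all_boot all_order all_algebra.
From mathcomp Require Import all_classical all_reals all_analysis.
Import numFieldNormedType.Exports.
Set Implicit Arguments. Unset Strict Implicit. Unset Printing Implicit Defensive.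
Import Order.TTheory GRing.Theory Num.Theory.
Local Open Scope ring_scope.
Local Open Scope classical_set_scope.

Section Defs.
Variable R : realType.

Definition norm2 (k : nat) (v : 'cV[R]_k) : R :=
  Num.sqrt (\sum_(i < k) v i 0 ^+ 2).

Definition specnorm (m k : nat) (A : 'M[R]_(m, k)) : R :=
  sup [set norm2 (A *m v) | v in [set v : 'cV[R]_k | norm2 v <= 1]].

Definition jacobian (M N : nat) (F : 'cV[R]_M -> 'cV[R]_N) (x : 'cV[R]_M)
  : 'M[R]_(N, M) :=
  \matrix_(a < N, b < M) ('D_(delta_mx b 0 : 'cV[R]_M) F x) a 0.

Definition netf (M N d P : nat) (g : 'cV[R]_d -> 'cV[R]_P -> 'cV[R]_N)
  (x : 'cV[R]_M) (th : 'M[R]_(d, M) * 'cV[R]_P) : 'cV[R]_N :=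
  g (th.1 *m x) th.2.

Definition loss (M N d P n : nat) (g : 'cV[R]_d -> 'cV[R]_P -> 'cV[R]_N)
  (x : 'I_n -> 'cV[R]_M) (y : 'I_n -> 'cV[R]_N)
  (th : 'M[R]_(d, M) * 'cV[R]_P) : R :=
  (n%:R)^-1 * \sum_(i < n) (2%:R^-1 * norm2 (netf g (x i) th - y i) ^+ 2).

Definition hess_trace (d M P : nat) (L : 'M[R]_(d, M) * 'cV[R]_P -> R)
  (th : 'M[R]_(d, M) * 'cV[R]_P) : R :=
  \sum_(j < d) \sum_(k < M)
     (let e : 'M[R]_(d, M) * 'cV[R]_P := (delta_mx j k, 0) in 'D_e ('D_e L) th)
  + \sum_(p < P)
     (let e : 'M[R]_(d, M) * 'cV[R]_P := (0, delta_mx p 0) in 'D_e ('D_e L) th).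

Definition sharpness (M N d P n : nat) (g : 'cV[R]_d -> 'cV[R]_P -> 'cV[R]_N)
  (x : 'I_n -> 'cV[R]_M) (y : 'I_n -> 'cV[R]_N)
  (th : 'M[R]_(d, M) * 'cV[R]_P) : R :=
  hess_trace (loss g x y) th.

Definition MLS (M N d P n : nat) (g : 'cV[R]_d -> 'cV[R]_P -> 'cV[R]_N)
  (x : 'I_n -> 'cV[R]_M) (th : 'M[R]_(d, M) * 'cV[R]_P) : R :=
  (n%:R)^-1 * \sum_(i < n) specnorm (jacobian (fun z => netf g z th) (x i)).

End Defs.

From Pilot Require Import Defs.
From mathcomp Require Import all_boot all_order all_algebra.
From mathcomp Require Import all_classical all_reals all_analysis.
From mathcomp Require Import ring lra.
Import numFieldNormedType.Exports.
Set Implicit Arguments. Unset Strict Implicit. Unset Printing Implicit Defensive.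
Import Order.TTheory GRing.Theory Num.Theory.
Local Open Scope ring_scope.

(* The input Jacobian factors through the first layer, J_f(x_i) = J_g(W x_i) W,
   so ||J_f(x_i)||_2 <= ||J_g(W x_i)||_F ||W||_2.  At an interpolating point the
   residuals vanish, so the Hessian of the loss reduces to its Gauss-Newton part
   and its trace is (1/n) sum_i ||d_theta f(x_i)||_F^2.  The derivative of f(x_i)
   along the weight W_jk is x_ik times the j-th column of J_g(W x_i), so the
   W-block alone contributes (1/n) sum_i ||x_i||^2 ||J_g(W x_i)||_F^2 <= S.
   Cauchy-Schwarz with the weights 1/||x_i|| and ||x_i|| ||J_g(W x_i)||_F
   concludes. *)

Lemma sqr_sum_mul_le (R : realDomainType) k (a b : 'I_k -> R) :
  (\sum_i a i * b i) ^+ 2 <= (\sum_i a i ^+ 2) * (\sum_i b i ^+ 2).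
Proof.
have sum_prod (u v : 'I_k -> R) :
    (\sum_i u i) * (\sum_j v j) = \sum_i \sum_j u i * v j.
  by rewrite mulr_suml; apply: eq_bigr => i _; rewrite mulr_sumr.
have lagrange : \sum_i \sum_j (a i * b j - a j * b i) ^+ 2 =
    (\sum_i a i ^+ 2) * (\sum_j b j ^+ 2) + (\sum_i b i ^+ 2) * (\sum_j a j ^+ 2)
    - 2 * ((\sum_i a i * b i) * (\sum_j a j * b j)).
  rewrite !sum_prod mulr_sumr -big_split -sumrB; apply: eq_bigr => i _.
  rewrite mulr_sumr -big_split -sumrB; apply: eq_bigr => j _ /=.
  ring.
have : 0 <= \sum_i \sum_j (a i * b j - a j * b i) ^+ 2.
  by apply: sumr_ge0 => i _; apply: sumr_ge0 => j _; exact: sqr_ge0.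
rewrite lagrange; nra.
Qed.

Lemma sum_le_sqrt_sum_inv_sqr (R : rcfType) k (w f : 'I_k -> R) :
  (forall i, w i != 0) ->
  \sum_i f i <=
    Num.sqrt (\sum_i (w i ^+ 2)^-1) * Num.sqrt (\sum_i w i ^+ 2 * f i ^+ 2).
Proof.
move=> w_neq0.
have sqr_ge0_sum (u : 'I_k -> R) : 0 <= \sum_i u i ^+ 2.
  by apply: sumr_ge0 => i _; exact: sqr_ge0.
have -> : \sum_i f i = \sum_i (w i)^-1 * (w i * f i).
  by apply: eq_bigr => i _; rewrite mulKf.
under [X in _ <= Num.sqrt X * _]eq_bigr do rewrite -exprVn.
under [X in _ <= _ * Num.sqrt X]eq_bigr do rewrite -exprMn.
rewrite -sqrtrM // (le_trans (ler_norm _)) // -sqrtr_sqr ler_sqrt //.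
  exact: sqr_sum_mul_le.
exact: mulr_ge0.
Qed.

Lemma mean_le_sqrt_mean_inv_sqr (R : rcfType) k (w f : 'I_k -> R) :
  (forall i, w i != 0) ->
  k%:R^-1 * \sum_i f i <=
    Num.sqrt (k%:R^-1 * \sum_i (w i ^+ 2)^-1)
    * Num.sqrt (k%:R^-1 * \sum_i w i ^+ 2 * f i ^+ 2).
Proof.
move=> w_neq0; have k_ge0 : 0 <= k%:R^-1 :> R by rewrite invr_ge0.
rewrite !sqrtrM // mulrACA -expr2 sqr_sqrtr // ler_wpM2l //.
exact: sum_le_sqrt_sum_inv_sqr.
Qed.

Section MatrixNorms.
Variable R : realType.

Definition frobnorm {m k : nat} (A : 'M[R]_(m, k)) : R :=
  Num.sqrt (\sum_i \sum_j A i j ^+ 2).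

Lemma sqr_norm2 k (v : 'cV[R]_k) : norm2 v ^+ 2 = \sum_i v i 0 ^+ 2.
Proof. by rewrite sqr_sqrtr //; apply: sumr_ge0 => i _; exact: sqr_ge0. Qed.

Lemma norm2_ge0 k (v : 'cV[R]_k) : 0 <= norm2 v.
Proof. exact: sqrtr_ge0. Qed.

Lemma norm2_0 k : norm2 (0 : 'cV[R]_k) = 0.
Proof. by rewrite /norm2 big1 ?sqrtr0 // => i _; rewrite mxE expr0n. Qed.

Lemma norm2_gt0 k (v : 'cV[R]_k) : v != 0 -> 0 < norm2 v.
Proof.
move=> v_neq0; rewrite lt_neqAle norm2_ge0 andbT eq_sym.
apply: contra v_neq0 => /eqP v0; apply/eqP/colP => i; rewrite mxE.
have sum0 : \sum_j v j 0 ^+ 2 = 0 by rewrite -sqr_norm2 v0 expr0n.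
apply/eqP; rewrite -sqrf_eq0; apply/eqP.
by apply: (psumr_eq0P _ sum0) => // j _; exact: sqr_ge0.
Qed.

Lemma sqr_frobnorm m k (A : 'M[R]_(m, k)) :
  frobnorm A ^+ 2 = \sum_i \sum_j A i j ^+ 2.
Proof.
rewrite sqr_sqrtr //.
by apply: sumr_ge0 => i _; apply: sumr_ge0 => j _; exact: sqr_ge0.
Qed.

Lemma frobnorm_ge0 m k (A : 'M[R]_(m, k)) : 0 <= frobnorm A.
Proof. exact: sqrtr_ge0. Qed.

Lemma norm2_mulmx_le m k (A : 'M[R]_(m, k)) v :
  norm2 (A *m v) <= frobnorm A * norm2 v.
Proof.
rewrite -sqrtrM; last by rewrite -sqr_frobnorm sqr_ge0.
rewrite ler_sqrt; last by rewrite -sqr_frobnorm -sqr_norm2 mulr_ge0 ?sqr_ge0.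
rewrite mulr_suml; apply: ler_sum => i _.
by rewrite mxE; exact: sqr_sum_mul_le.
Qed.

Lemma norm2_le_specnorm m k (A : 'M[R]_(m, k)) v :
  norm2 v <= 1 -> norm2 (A *m v) <= specnorm A.
Proof.
move=> v_le1; apply: sup_upper_bound; last by exists v.
split; first by exists (norm2 (A *m 0)), 0 => //=; rewrite norm2_0 ler01.
exists (frobnorm A) => _ [w w_le1 <-].
apply: (le_trans (norm2_mulmx_le A w)).
by rewrite -[leRHS]mulr1 ler_wpM2l // frobnorm_ge0.
Qed.

Lemma specnorm_ge0 m k (A : 'M[R]_(m, k)) : 0 <= specnorm A.
Proof.
apply: le_trans (norm2_le_specnorm A (v := 0) _); first exact: norm2_ge0.
by rewrite norm2_0 ler01.
Qed.

Lemma specnorm_mulmx_le m k l (B : 'M[R]_(m, k)) (A : 'M[R]_(k, l)) :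
  specnorm (B *m A) <= frobnorm B * specnorm A.
Proof.
apply: ge_sup; first by exists (norm2 (B *m A *m 0)), 0 => //=; rewrite norm2_0 ler01.
move=> _ [v v_le1 <-]; rewrite -mulmxA.
apply: (le_trans (norm2_mulmx_le B _)); apply: ler_wpM2l; first exact: frobnorm_ge0.
exact: norm2_le_specnorm.
Qed.

End MatrixNorms.

Section GaussNewton.
Variables (R : realType) (V : normedModType R) (N : nat).
Implicit Types (F : V -> 'cV[R]_N) (c : 'cV[R]_N).

Lemma is_derive_coord F a t e :
  derivable F t e -> is_derive t e (fun s => F s a 0) ('D_e F t a 0).
Proof.
move=> dF; apply: DeriveDef; first exact: (derivable_mxP _ _ _).1 dF a 0.
by rewrite (derive_mx dF) mxE.
Qed.

Lemma is_derive_half_sqr_dist F c t e : derivable F t e ->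
  is_derive t e (fun s => 2^-1 * norm2 (F s - c) ^+ 2)
    (\sum_a (F t a 0 - c a 0) * 'D_e F t a 0).
Proof.
move=> dF.
have -> : (fun s => 2^-1 * norm2 (F s - c) ^+ 2) =
    \sum_a 2^-1 \*: ((fun s => F s a 0) - cst (c a 0)) ^+ 2.
  apply/funext => s; rewrite sqr_norm2 fct_sumE mulr_sumr.
  by apply: eq_bigr => a _; rewrite !mxE.
apply: is_derive_eq.
  apply: is_derive_sum => a.
  exact: is_deriveZ (is_deriveX 2 (is_deriveB (is_derive_coord a dF) (is_derive_cst _ _ _))).
apply: eq_bigr => a _ /=.
by rewrite expr1 subr0 scalerA mulrA mulVf ?mul1r.
Qed.

Variables (n : nat) (F : 'I_n -> V -> 'cV[R]_N) (y : 'I_n -> 'cV[R]_N) (e : V).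
Hypothesis dF : forall i t, derivable (F i) t e.

Let mean_half_sqr_dist t := n%:R^-1 * \sum_i (2^-1 * norm2 (F i t - y i) ^+ 2).

Lemma derive_mean_half_sqr_dist :
  'D_e mean_half_sqr_dist =
    fun t => n%:R^-1 * \sum_i \sum_a (F i t a 0 - y i a 0) * 'D_e (F i) t a 0.
Proof.
apply/funext => t.
have -> : mean_half_sqr_dist =
    n%:R^-1 \*: \sum_i (fun s => 2^-1 * norm2 (F i s - y i) ^+ 2).
  by apply/funext => s; rewrite /mean_half_sqr_dist fct_sumE.
apply: derive_val; apply: is_deriveZ; apply: is_derive_sum => i.
exact: is_derive_half_sqr_dist.
Qed.

Lemma derive2_mean_half_sqr_dist_root t0 :
  (forall i, derivable ('D_e (F i)) t0 e) -> (forall i, F i t0 = y i) ->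
  'D_e ('D_e mean_half_sqr_dist) t0 =
    n%:R^-1 * \sum_i \sum_a ('D_e (F i) t0 a 0) ^+ 2.
Proof.
move=> dDF Fy; rewrite derive_mean_half_sqr_dist.
have -> : (fun t => n%:R^-1 * \sum_i \sum_a (F i t a 0 - y i a 0) * 'D_e (F i) t a 0) =
    n%:R^-1 \*: \sum_i \sum_a
      (((fun t => F i t a 0) - cst (y i a 0)) * (fun t => 'D_e (F i) t a 0)).
  apply/funext => t; rewrite !fct_sumE /=.
  by under [in RHS]eq_bigr do rewrite fct_sumE.
apply: derive_val; apply: is_deriveZ; apply: is_derive_eq.
  apply: is_derive_sum => i; apply: is_derive_sum => a.
  apply: is_deriveM.
    by apply: is_deriveB; exact: is_derive_coord.
  exact: is_derive_coord.
apply: eq_bigr => i _; apply: eq_bigr => a _ /=.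
by rewrite !fctE Fy subrr scale0r add0r subr0 expr2.
Qed.

End GaussNewton.

Section LinearFirstLayer.
Variable R : realType.
Local Open Scope classical_set_scope.

Lemma derive_jacobian M N (G : 'cV[R]_M -> 'cV[R]_N) z v :
  differentiable G z -> 'D_v G z = Defs.jacobian G z *m v.
Proof.
move=> dG; have v_delta : v = \sum_b v b 0 *: (delta_mx b 0 : 'cV[R]_M).
  by rewrite {1}[v]matrix_sum_delta; apply: eq_bigr => b _; rewrite big_ord1.
apply/colP => a; rewrite deriveE // {1}v_delta linear_sum summxE !mxE.
by apply: eq_bigr => b _; rewrite linearZ mxE mulrC !mxE deriveE.
Qed.

Lemma derive_comp_mulmx d M N (G : 'cV[R]_d -> 'cV[R]_N) (W : 'M[R]_(d, M)) z v :
  'D_v (fun z => G (W *m z)) z = 'D_(W *m v) G (W *m z).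
Proof.
rewrite /derive; congr (lim (_ @ 0^')); apply/funext => h /=.
by rewrite mulmxDr scalemxAr.
Qed.

Lemma jacobian_comp_mulmx d M N (G : 'cV[R]_d -> 'cV[R]_N) (W : 'M[R]_(d, M)) z :
  differentiable G (W *m z) ->
  Defs.jacobian (fun z => G (W *m z)) z = Defs.jacobian G (W *m z) *m W.
Proof.
move=> dG; apply/matrixP => a b.
by rewrite mxE derive_comp_mulmx derive_jacobian // mulmxA -colE mxE.
Qed.

Variables (M N d P : nat) (g : 'cV[R]_d -> 'cV[R]_P -> 'cV[R]_N).
Variables (W : 'M[R]_(d, M)) (thbar : 'cV[R]_P) (x : 'cV[R]_M).

Lemma derive_netf_weight (E : 'M[R]_(d, M)) :
  'D_((E, 0) : 'M[R]_(d, M) * 'cV[R]_P) (netf g x) (W, thbar) =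
    'D_(E *m x) (fun z => g z thbar) (W *m x).
Proof.
rewrite /derive; congr (lim (_ @ 0^')); apply/funext => h /=.
by rewrite /netf /= scaler0 add0r mulmxDl scalemxAl.
Qed.

Lemma derive_netf_delta j k a :
  differentiable (fun z => g z thbar) (W *m x) ->
  ('D_((delta_mx j k, 0) : 'M[R]_(d, M) * 'cV[R]_P) (netf g x) (W, thbar)) a 0 =
    x k 0 * Defs.jacobian (fun z => g z thbar) (W *m x) a j.
Proof.
move=> dg; rewrite derive_netf_weight derive_jacobian //.
rewrite -(mul_delta_mx (0 : 'I_1)) -mulmxA -rowE mulmxA -colE.
by rewrite mxE big_ord1 !mxE mulrC.
Qed.

End LinearFirstLayer.

Lemma sharpness_ge_input_jacobian (R : realType) (M N d P n : nat)
    (g : 'cV[R]_d -> 'cV[R]_P -> 'cV[R]_N)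
    (x : 'I_n -> 'cV[R]_M) (y : 'I_n -> 'cV[R]_N)
    (W : 'M[R]_(d, M)) (thbar : 'cV[R]_P) :
  (forall i, differentiable (fun z => g z thbar) (W *m x i)) ->
  (forall i th, differentiable (netf g (x i)) th) ->
  (forall i v, differentiable ('D_v (netf g (x i))) (W, thbar)) ->
  (forall i, netf g (x i) (W, thbar) = y i) ->
  n%:R^-1 * \sum_i norm2 (x i) ^+ 2
      * frobnorm (Defs.jacobian (fun z => g z thbar) (W *m x i)) ^+ 2
    <= sharpness g x y (W, thbar).
Proof.
move=> dg dF dDF interp.
set J := fun i => Defs.jacobian (fun z => g z thbar) (W *m x i).
have D2 e : 'D_e ('D_e (loss g x y)) (W, thbar) =
    n%:R^-1 * \sum_i \sum_a ('D_e (netf g (x i)) (W, thbar) a 0) ^+ 2.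
  apply: derive2_mean_half_sqr_dist_root => // i *; exact: diff_derivable.
have weight_block : \sum_(j < d) \sum_(k < M)
      'D_((delta_mx j k, 0) : 'M[R]_(d, M) * 'cV[R]_P)
        ('D_(delta_mx j k, 0) (loss g x y)) (W, thbar)
    = n%:R^-1 * \sum_i norm2 (x i) ^+ 2 * frobnorm (J i) ^+ 2.
  transitivity (n%:R^-1 * \sum_(j < d) \sum_(k < M) \sum_i \sum_a
                  (x i k 0 ^+ 2 * J i a j ^+ 2)).
    rewrite mulr_sumr; apply: eq_bigr => j _; rewrite mulr_sumr.
    apply: eq_bigr => k _; rewrite D2; congr (_ * _).
    apply: eq_bigr => i _; apply: eq_bigr => a _.
    by rewrite derive_netf_delta // exprMn.
  congr (_ * _); rewrite exchange_big; under eq_bigr do rewrite exchange_big.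
  rewrite exchange_big; apply: eq_bigr => i _ /=.
  rewrite sqr_norm2 sqr_frobnorm mulr_suml; apply: eq_bigr => k _.
  rewrite exchange_big mulr_sumr; apply: eq_bigr => a _.
  by rewrite mulr_sumr.
rewrite /sharpness /hess_trace /= weight_block -[leLHS]addr0 lerD2l.
apply: sumr_ge0 => p _; rewrite D2 mulr_ge0 ?invr_ge0 //.
by apply: sumr_ge0 => i _; apply: sumr_ge0 => a _; exact: sqr_ge0.
Qed.

Theorem proposition3 (R : realType) (M N d P n : nat)
  (g : 'cV[R]_d -> 'cV[R]_P -> 'cV[R]_N)
  (x : 'I_n -> 'cV[R]_M) (y : 'I_n -> 'cV[R]_N)
  (W : 'M[R]_(d, M)) (thbar : 'cV[R]_P) :
  (0 < n)%N ->
  (forall i, x i != 0) ->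
  (* g differentiable in its first argument *)
  (forall (t : 'cV[R]_P) (z : 'cV[R]_d), differentiable (fun z' => g z' t) z) ->
  (* f(x_i; .) twice differentiable in the parameters theta = (W, thbar) *)
  (forall i (th : 'M[R]_(d, M) * 'cV[R]_P), differentiable (netf g (x i)) th) ->
  (forall i (v th : 'M[R]_(d, M) * 'cV[R]_P),
      differentiable ('D_v (netf g (x i))) th) ->
  (* theta* = (W, thbar) interpolates the data exactly *)
  (forall i, netf g (x i) (W, thbar) = y i) ->
  MLS g x (W, thbar) <=
    specnorm W
    * Num.sqrt ((n%:R)^-1 * \sum_(i < n) (norm2 (x i) ^+ 2)^-1)
    * Num.sqrt (sharpness g x y (W, thbar)).
Proof.
move=> _ x_neq0 dg dF dDF interp.
set J := fun i => Defs.jacobian (fun z => g z thbar) (W *m x i).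
have sharpness_ge := sharpness_ge_input_jacobian (fun i => dg thbar _) dF
  (fun i v => dDF i v _) interp.
have MLS_le : MLS g x (W, thbar) <= specnorm W * (n%:R^-1 * \sum_i frobnorm (J i)).
  rewrite /MLS mulrCA ler_wpM2l ?invr_ge0 // mulr_sumr; apply: ler_sum => i _.
  by rewrite (jacobian_comp_mulmx (dg thbar _)) mulrC; exact: specnorm_mulmx_le.
rewrite -mulrA (le_trans MLS_le) // ler_wpM2l ?specnorm_ge0 //.
apply: le_trans (mean_le_sqrt_mean_inv_sqr (w := fun i => norm2 (x i)) _ _) _.
  by move=> i; rewrite gt_eqF // norm2_gt0.
rewrite ler_wpM2l ?sqrtr_ge0 // ler_sqrt //.
apply: le_trans sharpness_ge.
by rewrite mulr_ge0 ?invr_ge0 // sumr_ge0 // => i _; rewrite mulr_ge0 ?sqr_ge0.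
Qed.
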